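(* Let $\Pi=\{\pi^*_i\}_{i=1}^n$ be a set of policies where each $\pi^*_i$ is optimal with respect to weight vector $\mathbf{w}_i\in\mathcal{W}$, and suppose that the set $\Psi=\{\boldsymbol{\psi}^{\pi^*_i}\}_{i=1}^n$ of their expected successor features is an $\epsilon_1$-CCS. Let $\phi_{\max}=\max\|\boldsymbol{\phi}\|$ be the maximum norm of the reward feature vector. Then the GPI-expanded set $\Psi^{\text{GPI}}$ is an $\epsilon_2$-CCS, where $$\epsilon_2\le\min\Big\{\epsilon_1,\ \frac{2}{1-\gamma}\,\phi_{\max}\,\max_{\mathbf{w}\in\mathcal{W}}\min_i\|\mathbf{w}-\mathbf{w}_i\|\Big\}.$$
   Context: Consider MDPs $(\mathcal{S},\mathcal{A},p,r_{\mathbf{w}},\mu,\gamma)$ sharing $\mathcal{S},\mathcal{A}$, transition kernel $p$, initial state distribution $\mu$ and discount $\gamma\in[0,1)$, with rewards linear in fixed features $\boldsymbol{\phi}(s,a,s')\in\mathbb{R}^d$: $r_{\mathbf{w}}(s,a,s')=\boldsymbol{\phi}(s,a,s')\cdot\mathbf{w}$. The task set $\mathcal{W}$ is the probability simplex $\{\mathbf{w}\in\mathbb{R}^d:w_i\ge0,\sum_iw_i=1\}$. For a policy $\pi$, successor features are $\boldsymbol{\psi}^\pi(s,a)=\mathbb{E}_\pi[\sum_{i\ge0}\gamma^i\boldsymbol{\phi}(S_{t+i},A_{t+i},S_{t+i+1})\mid S_t=s,A_t=a]$, $q^\pi_{\mathbf{w}}(s,a)=\boldsymbol{\psi}^\pi(s,a)\cdot\mathbf{w}$,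 the expected successor feature vector is $\boldsymbol{\psi}^\pi=\mathbb{E}_{S_0\sim\mu}[\boldsymbol{\psi}^\pi(S_0,\pi(S_0))]$, and $v^\pi_{\mathbf{w}}=\boldsymbol{\psi}^\pi\cdot\mathbf{w}$; $v^*_{\mathbf{w}}=\max_\pi v^\pi_{\mathbf{w}}$ over all policies. The convex coverage set is $\mathrm{CCS}=\{\boldsymbol{\psi}^\pi\mid\exists\mathbf{w}\text{ s.t. }\forall\pi',\ v^\pi_{\mathbf{w}}\ge v^{\pi'}_{\mathbf{w}}\}$. A set $\Psi$ of expected successor feature vectors is an $\epsilon$-CCS if for all $\mathbf{w}\in\mathcal{W}$, $\max_{\boldsymbol{\psi}\in\mathrm{CCS}}\boldsymbol{\psi}\cdot\mathbf{w}-\max_{\boldsymbol{\psi}\in\Psi}\boldsymbol{\psi}\cdot\mathbf{w}\le\epsilon$ (equivalently $v^*_{\mathbf{w}}-\max_{\boldsymbol{\psi}\in\Psi}\boldsymbol{\psi}\cdot\mathbf{w}\le\epsilon$). For a policy set $\Pi$ and $\mathbf{w}\in\mathcal{W}$, the GPI policy is $\pi^{\text{GPI}}(s;\mathbf{w})\in\arg\max_{a\in\mathcal{A}}\max_{\pi\in\Pi}q^\pi_{\mathbf{w}}(s,a)$, and the GPI-expanded set is $\Psi^{\text{GPI}}=\{\boldsymbol{\psi}^\pi\mid\pi\in\{\pi^{\text{GPI}}(\cdot;\mathbf{w}):\mathbf{w}\in\mathcal{W}\}\}$. *)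

From HB Require Import structures.
From mathcomp Require Import all_boot all_order all_algebra.
From mathcomp Require Import all_classical all_reals all_analysis.
Set Implicit Arguments. Unset Strict Implicit. Unset Printing Implicit Defensive.
Import Order.TTheory GRing.Theory Num.Theory.
Import numFieldNormedType.Exports.
Local Open Scope classical_set_scope.
Local Open Scope ring_scope.

Section Defs.
Variables (R : realType) (S A : finType) (d : nat).

Definition dotv (u v : 'rV[R]_d) : R := \sum_(k < d) u 0 k * v 0 k.
Definition norm2 (u : 'rV[R]_d) : R := Num.sqrt (dotv u u).

(* The task set W: the probability simplex. *)
Definition simplex : set 'rV[R]_d :=
  [set w | (forall k, 0 <= w 0 k) /\ \sum_(k < d) w 0 k = 1].

Definition is_kernel (p : S -> A -> S -> R) : Prop :=
  forall s a, (forall s', 0 <= p s a s') /\ \sum_(s' : S) p s a s' = 1.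
Definition is_distr (mu : S -> R) : Prop :=
  (forall s, 0 <= mu s) /\ \sum_(s : S) mu s = 1.

(* occ p pi s a t x b = Pr(S_{t'+t} = x, A_{t'+t} = b | S_{t'} = s, A_{t'} = a),
   following pi after the first action. *)
Fixpoint occ (p : S -> A -> S -> R) (pi : S -> A) (s : S) (a : A) (t : nat)
  : S -> A -> R :=
  match t with
  | 0 => fun x b => if (x == s) && (b == a) then 1 else 0
  | t'.+1 => fun y c =>
      if c == pi y then \sum_(x : S) \sum_(b : A) occ p pi s a t' x b * p x b y
      else 0
  end.

(* Successor features psi^pi(s,a)
   = E_pi[ sum_i gamma^i phi(S_{t+i},A_{t+i},S_{t+i+1}) | S_t = s, A_t = a ]. *)
Definition sf (p : S -> A -> S -> R) (phi : S -> A -> S -> 'rV[R]_d) (gamma : R)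
  (pi : S -> A) (s : S) (a : A) : 'rV[R]_d :=
  \row_k limn (series (fun t : nat =>
     gamma ^+ t * \sum_(x : S) \sum_(b : A)
        occ p pi s a t x b * \sum_(y : S) p x b y * phi x b y 0 k)).

Definition qval p phi gamma pi (w : 'rV[R]_d) s a : R :=
  dotv (sf p phi gamma pi s a) w.

Definition esf p (mu : S -> R) phi gamma (pi : S -> A) : 'rV[R]_d :=
  \sum_(s : S) mu s *: sf p phi gamma pi s (pi s).

Definition vpol p mu phi gamma pi (w : 'rV[R]_d) : R := dotv (esf p mu phi gamma pi) w.

Definition vstar p mu phi gamma (w : 'rV[R]_d) : R :=
  sup [set vpol p mu phi gamma pi w | pi in [set: S -> A]].

Definition optimal_for p mu phi gamma (pi : S -> A) (w : 'rV[R]_d) : Prop :=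
  forall pi' : S -> A, vpol p mu phi gamma pi' w <= vpol p mu phi gamma pi w.

Definition eps_CCS p mu phi gamma (Psi : set 'rV[R]_d) (eps : R) : Prop :=
  forall w, simplex w ->
    vstar p mu phi gamma w - sup [set dotv psi w | psi in Psi] <= eps.

(* GPI policy w.r.t. the policy set {pis i} and weight w:
   pi s in argmax_a max_i q^{pis i}_w(s,a). *)
Definition is_gpi_policy p phi gamma (n : nat) (pis : 'I_n -> S -> A)
  (w : 'rV[R]_d) (pi : S -> A) : Prop :=
  forall s (a : A) (i : 'I_n), exists j : 'I_n,
    qval p phi gamma (pis i) w s a <= qval p phi gamma (pis j) w s (pi s).

Definition phi_max (phi : S -> A -> S -> 'rV[R]_d) : R :=
  \big[Num.max/0]_(s : S) \big[Num.max/0]_(a : A) \big[Num.max/0]_(s' : S)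
     norm2 (phi s a s').

Definition cover_radius (n : nat) (ws : 'I_n -> 'rV[R]_d) : R :=
  sup [set inf [set norm2 (w - ws i) | i in [set: 'I_n]] | w in simplex].

End Defs.

From HB Require Import structures.
From mathcomp Require Import all_boot all_order all_algebra.
From mathcomp Require Import all_classical all_reals all_analysis.
Import Order.TTheory GRing.Theory Num.Theory.
Import numFieldNormedType.Exports.
Local Open Scope classical_set_scope.
Local Open Scope ring_scope.
From mathcomp Require Import ring lra.
Set Implicit Arguments. Unset Strict Implicit. Unset Printing Implicit Defensive.

(* Generalized policy improvement is a contraction argument: the largest
   advantage [q^{pi_i}_w - q^GPI_w] over all [i, s, a] is at most [gamma] times
   itself, hence nonpositive, so [v^GPI(w)_w] dominates every [psi^{pi_i} . w]
   and the GPI-expanded set inherits the [eps1] bound.  For the second bound,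
   the value of a fixed policy is [phi_max / (1 - gamma)]-Lipschitz in [w]; the
   policy [pi_i] optimal at the nearest [w_i] is therefore within
   [2 phi_max |w - w_i| / (1 - gamma)] of optimal at [w], and GPI does at least
   as well as [pi_i].  Both steps rest on the Bellman equation, which follows
   from a first-step decomposition of the occupancy series defining [sf]. *)

Section Averages.
Variables (R : realType) (I : finType) (q : I -> R).
Hypothesis q_distr : is_distr q.

Lemma avg_le (f : I -> R) M : (forall i, f i <= M) -> \sum_i q i * f i <= M.
Proof.
move=> fM; have [q_ge0 q_sum1] := q_distr.
apply: le_trans (_ : \sum_i q i * M <= M); first by apply: ler_sum => i _; exact: ler_wpM2l.
by rewrite -mulr_suml q_sum1 mul1r.
Qed.

Lemma norm_avg_le (f : I -> R) M : (forall i, `|f i| <= M) -> `|\sum_i q i * f i| <= M.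
Proof.
move=> fM; have [q_ge0 _] := q_distr.
apply: le_trans (ler_norm_sum _ _ _) _.
under eq_bigr do rewrite normrM ger0_norm //.
exact: avg_le.
Qed.

End Averages.

Lemma bigmax_contraction (R : realType) (I : finType) (gamma c : R) (f : I -> R) :
  0 <= gamma -> gamma < 1 -> 0 <= c ->
  (forall i, f i <= c + gamma * \big[Num.max/0]_j f j) ->
  forall i, f i <= c / (1 - gamma).
Proof.
move=> g0 g1 c0 fM i; set M := \big[Num.max/0]_j f j.
have M0 : 0 <= M by exact: bigmax_ge_id.
have MM : M <= c + gamma * M.
  by apply: bigmax_le => [|j _]; [exact/addr_ge0/mulr_ge0 | exact: fM].
apply: le_trans (le_bigmax 0 f i) _.
by rewrite ler_pdivlMr ?subr_gt0 // mulrBr mulr1 lerBlDr mulrC.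
Qed.

Section DotProduct.
Variables (R : realType) (d : nat).
Implicit Types (u v w : 'rV[R]_d).

Lemma dotvC u v : dotv u v = dotv v u.
Proof. by apply: eq_bigr => k _; rewrite mulrC. Qed.

Lemma dotvDl u u' v : dotv (u + u') v = dotv u v + dotv u' v.
Proof. by rewrite /dotv -big_split; apply: eq_bigr => k _; rewrite mxE mulrDl. Qed.

Lemma dotvDr u v v' : dotv u (v + v') = dotv u v + dotv u v'.
Proof. by rewrite !(dotvC u) dotvDl. Qed.

Lemma dotvZl c u v : dotv (c *: u) v = c * dotv u v.
Proof. by rewrite /dotv mulr_sumr; apply: eq_bigr => k _; rewrite mxE mulrA. Qed.

Lemma dotv_suml (I : finType) (u : I -> 'rV[R]_d) v :
  dotv (\sum_i u i) v = \sum_i dotv (u i) v.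
Proof.
rewrite /dotv exchange_big; apply: eq_bigr => k _.
by rewrite summxE mulr_suml.
Qed.

Lemma norm2_ge0 u : 0 <= norm2 u.
Proof. exact: sqrtr_ge0. Qed.

(* Lagrange's identity: the defect of Cauchy-Schwarz is a sum of squares. *)
Lemma cauchy_schwarz_sum (x y : 'I_d -> R) :
  (\sum_k x k * y k) ^+ 2 <= (\sum_k x k ^+ 2) * (\sum_k y k ^+ 2).
Proof.
have sq_ge0 : 0 <= \sum_k \sum_l (x k * y l - x l * y k) ^+ 2.
  by apply: sumr_ge0 => k _; apply: sumr_ge0 => l _; exact: sqr_ge0.
have lagrange : \sum_k \sum_l (x k * y l - x l * y k) ^+ 2 =
    \sum_k \sum_l (x k ^+ 2 * y l ^+ 2) + \sum_k \sum_l (x l ^+ 2 * y k ^+ 2)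
    - 2 * \sum_k \sum_l (x k * y k * (x l * y l)).
  rewrite mulr_sumr -big_split -sumrB /=; apply: eq_bigr => k _.
  rewrite mulr_sumr -big_split -sumrB /=; apply: eq_bigr => l _.
  ring.
rewrite [X in _ + X - _]exchange_big /= in lagrange.
rewrite expr2 !big_distrlr /=; lra.
Qed.

Lemma dotv_norm_le u v : `|dotv u v| <= norm2 u * norm2 v.
Proof.
have sum_sqr w : dotv w w = \sum_k w 0 k ^+ 2 by apply: eq_bigr => k _; rewrite expr2.
have dotv_ge0 w : 0 <= dotv w w by rewrite sum_sqr; apply: sumr_ge0 => k _; exact: sqr_ge0.
rewrite /norm2 -sqrtrM // -sqrtr_sqr ler_sqrt; last exact/mulr_ge0.
by rewrite !sum_sqr; exact: cauchy_schwarz_sum.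
Qed.

Lemma simplex_coord w k : simplex w -> 0 <= w 0 k <= 1.
Proof.
move=> [w_ge0 w_sum1]; rewrite w_ge0 -w_sum1 (bigD1 k) //= lerDl.
exact: sumr_ge0.
Qed.

Lemma norm2_simplexB_le v w : simplex v -> simplex w -> norm2 (v - w) <= Num.sqrt d%:R.
Proof.
move=> Hv Hw; rewrite /norm2 ler_sqrt ?ler0n //.
rewrite -[d in d%:R]card_ord -sumr_const; apply: ler_sum => k _; rewrite !mxE.
have /andP[v0 v1] := simplex_coord k Hv; have /andP[w0 w1] := simplex_coord k Hw.
nra.
Qed.

End DotProduct.

Lemma sup_image_le (R : realType) (T : Type) (D : set T) (f : T -> R) t0 b :
  D t0 -> (forall t, D t -> f t <= b) -> sup (f @` D) <= b.
Proof.
move=> Dt0 f_le; apply: ge_sup; first by exists (f t0), t0.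
by move=> _ [t Dt <-]; exact: f_le.
Qed.

Section Bellman.
Variables (R : realType) (S A : finType) (d : nat).
Variables (p : S -> A -> S -> R) (gamma : R) (phi : S -> A -> S -> 'rV[R]_d).
Hypotheses (Hp : is_kernel p) (Hg0 : 0 <= gamma) (Hg1 : gamma < 1).

Definition exp_feature s a : 'rV[R]_d := \sum_y p s a y *: phi s a y.

Lemma phi_max_ge0 : 0 <= phi_max phi.
Proof. exact: bigmax_ge_id. Qed.

Lemma norm2_le_phi_max s a y : norm2 (phi s a y) <= phi_max phi.
Proof.
apply: le_trans (le_bigmax 0 _ s); apply: le_trans (le_bigmax 0 _ a).
exact: (le_bigmax 0 (fun y => norm2 (phi s a y)) y).
Qed.

Lemma exp_reward_norm_le u s a : `|dotv (exp_feature s a) u| <= phi_max phi * norm2 u.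
Proof.
rewrite dotv_suml; under eq_bigr do rewrite dotvZl.
apply: (norm_avg_le (Hp s a)) => y; apply: le_trans (dotv_norm_le _ _) _.
by apply: ler_wpM2r; [exact: norm2_ge0 | exact: norm2_le_phi_max].
Qed.

Section FixedPolicy.
Variable pi : S -> A.

Definition discounted_recursive (F : nat -> S -> A -> R) :=
  forall t s a, F t.+1 s a = gamma * \sum_y p s a y * F t y (pi y).

Section DiscountedSeries.
Variables (F : nat -> S -> A -> R) (C : R).
Hypotheses (F_rec : discounted_recursive F) (F0_le : forall s a, `|F 0%N s a| <= C).

Lemma discounted_recursive_norm_le t s a : `|F t s a| <= C * gamma ^+ t.
Proof.
elim: t s a => [|t IH] s a; first by rewrite expr0 mulr1.
rewrite F_rec normrM ger0_norm // exprS mulrCA ler_wpM2l //.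
exact: norm_avg_le.
Qed.

Lemma discounted_series_cvg s a : cvgn (series (fun t => F t s a)).
Proof.
have C0 : 0 <= C by exact: le_trans (F0_le s a).
apply: normed_cvg; apply: (@series_le_cvg _ _ (geometric C gamma)) => [t|t|t|] /=.
- exact: normr_ge0.
- by rewrite mulr_ge0 ?exprn_ge0.
- exact: discounted_recursive_norm_le.
- by apply: is_cvg_geometric_series; rewrite ger0_norm.
Qed.

Lemma discounted_series_bellman s a :
  limn (series (fun t => F t s a)) =
  F 0%N s a + gamma * \sum_y p s a y * limn (series (fun t => F t y (pi y))).
Proof.
apply: cvg_lim => //; rewrite -cvg_shiftS /=.
have -> : (fun n => series (fun t => F t s a) n.+1) =
    (fun n => F 0%N s a + gamma * \sum_y p s a y * series (fun t => F t y (pi y)) n).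
  apply: funext => n; rewrite /series /= big_nat_recl //; congr (_ + _).
  under eq_bigr do rewrite F_rec.
  rewrite -mulr_sumr; congr (_ * _).
  under eq_bigr do rewrite mulr_sumr.
  by rewrite exchange_big.
apply: cvgD; first exact: cvg_cst.
apply: cvgM; first exact: cvg_cst.
apply: cvg_big => [[x1 x2] /= | y _]; first exact: add_continuous.
apply: cvgM; first exact: cvg_cst.
exact: discounted_series_cvg.
Qed.

End DiscountedSeries.

Lemma sum_indicator (f : S -> A -> R) s a :
  \sum_x \sum_b (if (x == s) && (b == a) then 1 else 0) * f x b = f s a.
Proof.
rewrite (bigD1 s) //= [X in _ + X]big1 => [|x /negbTE xs]; last first.
  by apply: big1 => b _; rewrite xs mul0r.
rewrite addr0 (bigD1 a) //= !eqxx mul1r [X in _ + X]big1 ?addr0 // => b /negbTE ba.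
by rewrite ba andbF mul0r.
Qed.

Lemma sum_mixture (c : S -> R) (o : S -> S -> A -> R) (h : S -> A -> R) :
  \sum_x \sum_b (\sum_y c y * o y x b) * h x b =
  \sum_y c y * \sum_x \sum_b o y x b * h x b.
Proof.
under eq_bigr do under eq_bigr do rewrite mulr_suml.
under eq_bigr do rewrite exchange_big.
rewrite exchange_big; apply: eq_bigr => y _.
rewrite mulr_sumr; apply: eq_bigr => x _.
by rewrite mulr_sumr; apply: eq_bigr => b _; rewrite mulrA.
Qed.

Lemma occ_first_step s a t x b :
  occ p pi s a t.+1 x b = \sum_y p s a y * occ p pi y (pi y) t x b.
Proof.
elim: t x b => [|t IH] x b.
  rewrite /= sum_indicator (bigD1 x) //= eqxx big1 ?addr0 => [|y yx]; last first.
    by rewrite eq_sym (negbTE yx) /= mulr0.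
  by case: (b == pi x); rewrite /= ?mulr1 ?mulr0.
transitivity (if b == pi x then \sum_x' \sum_b' occ p pi s a t.+1 x' b' * p x' b' x
              else 0); first by [].
rewrite [RHS]/=; case: ifP => _; last by rewrite big1 // => y _; rewrite mulr0.
under [LHS]eq_bigr do under eq_bigr do rewrite IH.
exact: sum_mixture.
Qed.

(* [gamma^t E[g(S_t, A_t) | S_0 = s, A_0 = a]]; entry [k] of [sf] is the series of
   these terms for [g] the expected [k]-th feature. *)
Definition occ_value (g : S -> A -> R) t s a :=
  gamma ^+ t * \sum_x \sum_b occ p pi s a t x b * g x b.

Lemma occ_value_recursive g : discounted_recursive (occ_value g).
Proof.
move=> t s a; rewrite /occ_value.
under eq_bigr do under eq_bigr do rewrite occ_first_step.
rewrite sum_mixture exprS -mulrA mulr_sumr; congr (_ * _).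
by apply: eq_bigr => y _; rewrite mulrCA.
Qed.

Lemma occ_value0 g s a : occ_value g 0 s a = g s a.
Proof. by rewrite /occ_value expr0 mul1r sum_indicator. Qed.

Lemma sf_bellman s a :
  sf p phi gamma pi s a =
  exp_feature s a + gamma *: \sum_y p s a y *: sf p phi gamma pi y (pi y).
Proof.
apply/rowP => k; rewrite !mxE !summxE.
pose g x b := \sum_y p x b y * phi x b y 0 k.
have g_bound s' a' : `|occ_value g 0 s' a'| <= \sum_x \sum_b `|g x b|.
  rewrite occ_value0 (bigD1 s') //= (bigD1 a') //= -addrA lerDl.
  by apply: addr_ge0; apply: sumr_ge0 => *; [|apply: sumr_ge0 => *].
rewrite (discounted_series_bellman (occ_value_recursive g) g_bound) occ_value0.
by congr (_ + _ * _); apply: eq_bigr => y _; rewrite !mxE.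
Qed.

Lemma qval_bellman w s a :
  qval p phi gamma pi w s a =
  dotv (exp_feature s a) w + gamma * \sum_y p s a y * qval p phi gamma pi w y (pi y).
Proof.
rewrite /qval sf_bellman dotvDl dotvZl; congr (_ + _ * _).
by rewrite dotv_suml; apply: eq_bigr => y _; rewrite dotvZl.
Qed.

Lemma qval_norm_le u s a :
  `|qval p phi gamma pi u s a| <= phi_max phi * norm2 u / (1 - gamma).
Proof.
pose f x := `|qval p phi gamma pi u x.1 x.2|.
have c_ge0 : 0 <= phi_max phi * norm2 u by exact: mulr_ge0 phi_max_ge0 (norm2_ge0 u).
apply: (bigmax_contraction (f := f) Hg0 Hg1 c_ge0 _ (s, a)) => -[s' a'].
rewrite /f /= qval_bellman; apply: le_trans (ler_normD _ _) _.
apply: lerD; first exact: exp_reward_norm_le.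
rewrite normrM ger0_norm // ler_wpM2l //; apply: (norm_avg_le (Hp s' a')) => y.
exact: (le_bigmax 0 f (y, pi y)).
Qed.

End FixedPolicy.

Lemma qval_le_gpi n (pis : 'I_n -> S -> A) w pi :
  is_gpi_policy p phi gamma pis w pi ->
  forall i s a, qval p phi gamma (pis i) w s a <= qval p phi gamma pi w s a.
Proof.
move=> gpi i s a; rewrite -subr_le0.
pose f x := qval p phi gamma (pis x.1.1) w x.1.2 x.2 - qval p phi gamma pi w x.1.2 x.2.
have := bigmax_contraction (f := f) Hg0 Hg1 (lexx 0) _ (i, s, a); rewrite mul0r; apply.
move=> [[j s'] a']; rewrite add0r /f /= !qval_bellman.
rewrite opprD addrACA subrr add0r -mulrBr -sumrB ler_wpM2l //.
under [X in X <= _]eq_bigr do rewrite -mulrBr.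
apply: (avg_le (Hp s' a')) => y; have [k le_jk] := gpi y (pis j y) j.
by apply: le_trans (le_bigmax 0 f (k, y, pi y)); rewrite /f /= lerD2r.
Qed.

Section Values.
Variable mu : S -> R.
Hypothesis Hmu : is_distr mu.
Local Notation V := (vpol p mu phi gamma).

Lemma vpolE pi w : V pi w = \sum_s mu s * qval p phi gamma pi w s (pi s).
Proof. by rewrite /vpol /esf dotv_suml; apply: eq_bigr => s _; rewrite dotvZl. Qed.

Lemma vpol_norm_le pi u : `|V pi u| <= phi_max phi * norm2 u / (1 - gamma).
Proof. by rewrite vpolE; apply: (norm_avg_le Hmu) => s; exact: qval_norm_le. Qed.

Lemma vpolDr pi u v : V pi (u + v) = V pi u + V pi v.
Proof. exact: dotvDr. Qed.

Lemma vpol_le_gpi n (pis : 'I_n -> S -> A) w pi i :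
  is_gpi_policy p phi gamma pis w pi -> V (pis i) w <= V pi w.
Proof.
move=> gpi; rewrite !vpolE; apply: ler_sum => s _.
apply: ler_wpM2l; first by case: Hmu.
have [j le_ij] := gpi s (pis i s) i.
exact: le_trans le_ij (qval_le_gpi gpi j s (pi s)).
Qed.

Lemma vpol_le_transfer pi0 w0 pi w :
  optimal_for p mu phi gamma pi0 w0 ->
  V pi w <= V pi0 w + 2 / (1 - gamma) * phi_max phi * norm2 (w - w0).
Proof.
move=> pi0_opt; have w_split : w = w0 + (w - w0) by rewrite addrC subrK.
have := vpol_norm_le pi (w - w0); have := vpol_norm_le pi0 (w - w0).
rewrite !ler_norml => /andP[pi0_lo _] /andP[_ pi_hi].
have := pi0_opt pi.
rewrite [in V pi w]w_split [in V pi0 w]w_split (vpolDr pi) (vpolDr pi0).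
have -> : 2 / (1 - gamma) * phi_max phi * norm2 (w - w0) =
          2 * (phi_max phi * norm2 (w - w0) / (1 - gamma)) by ring.
lra.
Qed.

Lemma dotv_esf_image (T : Type) (D : set T) (pol : T -> S -> A) w :
  [set dotv psi w | psi in [set esf p mu phi gamma (pol t) | t in D]] =
  [set V (pol t) w | t in D].
Proof. by rewrite image_comp. Qed.

Lemma vpol_le_sup (T : Type) (D : set T) (pol : T -> S -> A) t w :
  D t -> V (pol t) w <= sup [set V (pol t') w | t' in D].
Proof.
move=> Dt; apply: ub_le_sup; last by exists t.
exists (phi_max phi * norm2 w / (1 - gamma)) => _ [t' _ <-].
exact: le_trans (ler_norm _) (vpol_norm_le _ _).
Qed.

Lemma vstar_le (pi0 : S -> A) w b :
  (forall pi, V pi w <= b) -> vstar p mu phi gamma w <= b.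
Proof. by move=> V_le; apply: (sup_image_le (t0 := pi0)). Qed.

End Values.
End Bellman.

Lemma near_le_cover_radius (R : realType) (d n : nat) (ws : 'I_n -> 'rV[R]_d) w :
  (0 < n)%N -> (forall i, simplex (ws i)) -> simplex w ->
  exists i, norm2 (w - ws i) <= cover_radius ws.
Proof.
move=> n_gt0 ws_simplex w_simplex; pose i0 := Ordinal n_gt0.
have [i _ i_min] := @arg_minP _ _ _ i0 xpredT (fun j => norm2 (w - ws j)) isT.
exists i; apply: (@le_trans _ _ (inf [set norm2 (w - ws j) | j in setT])).
  apply: lb_le_inf; first by exists (norm2 (w - ws i)), i.
  by move=> _ [j _ <-]; exact: i_min.
apply: ub_le_sup; last by exists w.
exists (Num.sqrt d%:R) => _ [v v_simplex <-].
apply: le_trans (norm2_simplexB_le v_simplex (ws_simplex i0)).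
apply: ge_inf; last by exists i0.
by exists 0 => _ [j _ <-]; exact: norm2_ge0.
Qed.

Theorem theorem2 (R : realType) (S A : finType) (d : nat)
  (p : S -> A -> S -> R) (mu : S -> R) (gamma : R)
  (phi : S -> A -> S -> 'rV[R]_d)
  (Hp : is_kernel p) (Hmu : is_distr mu)
  (Hg0 : 0 <= gamma) (Hg1 : gamma < 1)
  (n : nat) (Hn : (0 < n)%N)
  (pis : 'I_n -> S -> A) (ws : 'I_n -> 'rV[R]_d)
  (Hws : forall i, simplex (ws i))
  (Hopt : forall i, optimal_for p mu phi gamma (pis i) (ws i))
  (eps1 : R)
  (HPsi : eps_CCS p mu phi gamma
            [set esf p mu phi gamma (pis i) | i in [set: 'I_n]] eps1)
  (gpi : 'rV[R]_d -> S -> A)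
  (Hgpi : forall w, simplex w -> is_gpi_policy p phi gamma pis w (gpi w)) :
  eps_CCS p mu phi gamma
    [set esf p mu phi gamma (gpi w) | w in @simplex R d]
    (Num.min eps1
       (2 / (1 - gamma) * phi_max phi * cover_radius ws)).
Proof.
move=> w w_simplex; have := HPsi w w_simplex; rewrite !dotv_esf_image => Psi_gap.
have gpi_w_le := vpol_le_sup phi Hp Hg0 Hg1 Hmu gpi w w_simplex.
set gpi_sup := sup _ in gpi_w_le *.
have Psi_le : sup [set vpol p mu phi gamma (pis i) w | i in [set: 'I_n]] <= gpi_sup.
  apply: (sup_image_le (t0 := Ordinal Hn)) => // i _.
  exact: le_trans (vpol_le_gpi Hp Hg0 Hg1 Hmu i (Hgpi w w_simplex)) gpi_w_le.
rewrite le_min; apply/andP; split; first lra.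
have [i near_i] := near_le_cover_radius Hn Hws w_simplex.
have := vstar_le (pis i) (fun pi => vpol_le_transfer Hp Hg0 Hg1 Hmu pi w (Hopt i)).
have : 2 / (1 - gamma) * phi_max phi * norm2 (w - ws i) <=
       2 / (1 - gamma) * phi_max phi * cover_radius ws.
  apply: ler_wpM2l near_i; apply: mulr_ge0 (phi_max_ge0 phi).
  by apply: divr_ge0; lra.
have := vpol_le_gpi Hp Hg0 Hg1 Hmu i (Hgpi w w_simplex).
lra.
Qed.
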